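(* Let $(\pi_1,\pi_2)$ be any (not necessarily chainable) architecture of depth $2$, i.e. patterns $\pi_i=(a_i,b_i,c_i,d_i)$ with $a_1c_1d_1=a_2b_2d_2$. Then the rank-one contribution supports $\mathbf{U}_i=\mathbf{S}_{\pi_1}[:,i]\mathbf{S}_{\pi_2}[i,:]$, $1\le i\le a_1c_1d_1$, are pairwise either disjoint (in support) or identical. Consequently, for every complex matrix $\mathbf{A}$ of size $a_1b_1d_1\times a_2c_2d_2$, the TwoFactor procedure with input $(\mathbf{A},\mathbf{S}_{\pi_1},\mathbf{S}_{\pi_2})$ returns an optimal solution of $$\inf_{\mathbf{X}\in\Sigma^{\pi_1},\mathbf{Y}\in\Sigma^{\pi_2}}\|\mathbf{A}-\mathbf{X}\mathbf{Y}\|_F^2.$$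
   Context: A pattern is a tuple $\pi=(a,b,c,d)$ of positive integers; $\mathbf{S}_\pi:=\mathbf{I}_a\otimes\mathbf{1}_{b\times c}\otimes\mathbf{I}_d\in\{0,1\}^{abd\times acd}$. A $\pi$-factor is a complex $abd\times acd$ matrix with support contained in that of $\mathbf{S}_\pi$; $\Sigma^\pi$ is the set of $\pi$-factors. For binary $\mathbf{L}\in\{0,1\}^{m\times r},\mathbf{R}\in\{0,1\}^{r\times n}$, let $\mathbf{U}_i:=\mathbf{L}[:,i]\mathbf{R}[i,:]$, let $\mathcal{P}(\mathbf{L},\mathbf{R})$ be the partition of $\{1,\dots,r\}$ into classes of $i\sim j\iff\mathbf{U}_i=\mathbf{U}_j$, and for a class $P$ let $R_P\times C_P$ be the support of $\mathbf{U}_i$, $i\in P$. TwoFactor$(\mathbf{A},\mathbf{L},\mathbf{R})$: set $\mathbf{X}=\mathbf{0}_{m\times r},\mathbf{Y}=\mathbf{0}_{r\times n}$; for each $P\in\mathcal{P}(\mathbf{L},\mathbf{R})$ set $(\mathbf{X}[R_P,P],\mathbf{Y}[P,C_P])$ to a pair $(\mathbf{H},\mathbf{K})\in\mathbb{C}^{|R_P|\times|P|}\times\mathbb{C}^{|P|\times|C_P|}$ minimizing $\|\mathbf{A}[R_P,C_P]-\mathbf{H}\mathbf{K}\|_F$; return $(\mathbf{X},\mathbf{Y})$. *)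

From HB Require Import structures.
From mathcomp Require Import all_boot all_order all_algebra.
From mathcomp Require Import complex mxtens.
From mathcomp Require Import reals.
Set Implicit Arguments. Unset Strict Implicit. Unset Printing Implicit Defensive.
Import Order.TTheory GRing.Theory Num.Theory.
Local Open Scope ring_scope.

(* A pattern pi = (a,b,c,d) and its support matrix
   S_pi = I_a (x) 1_{b x c} (x) I_d, an (a*b*d) x (a*c*d) 0/1 matrix
   over a field F (Kronecker product = tensmx, row-major index i*n+j). *)
Definition Spat (F : fieldType) (a b c d : nat) : 'M[F]_(a * b * d, a * c * d) :=
  tensmx (tensmx (1%:M : 'M[F]_a) (const_mx 1 : 'M[F]_(b, c))) (1%:M : 'M[F]_d).

Definition is_factor (F : fieldType) (m n : nat) (S X : 'M[F]_(m, n)) : Prop :=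
  forall i j, S i j = 0 -> X i j = 0.

Definition frob2 (R : rcfType) (m n : nat) (M : 'M[R[i]]_(m, n)) : R[i] :=
  \sum_(i < m) \sum_(j < n) `|M i j| ^+ 2.

Definition Ucontrib (F : fieldType) (m r n : nat)
  (L : 'M[F]_(m, r)) (Rm : 'M[F]_(r, n)) (k : 'I_r) : 'M[F]_(m, n) :=
  col k L *m row k Rm.

Definition Urows (F : fieldType) (m r n : nat) (L : 'M[F]_(m, r)) (Rm : 'M[F]_(r, n))
  (k : 'I_r) (i : 'I_m) : bool := [exists j, Ucontrib L Rm k i j != 0].
Definition Ucols (F : fieldType) (m r n : nat) (L : 'M[F]_(m, r)) (Rm : 'M[F]_(r, n))
  (k : 'I_r) (j : 'I_n) : bool := [exists i, Ucontrib L Rm k i j != 0].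
Definition Uclass (F : fieldType) (m r n : nat) (L : 'M[F]_(m, r)) (Rm : 'M[F]_(r, n))
  (k k' : 'I_r) : bool := Ucontrib L Rm k' == Ucontrib L Rm k.

(* Block error ||A[R_P,C_P] - H K||_F^2 where the block H (rows R_P, columns P)
   is read off X and K (rows P, columns C_P) off Y; k represents the class P. *)
Definition block_err (R : rcfType) (m r n : nat) (L : 'M[R[i]]_(m, r))
  (Rm : 'M[R[i]]_(r, n)) (A : 'M[R[i]]_(m, n)) (k : 'I_r)
  (X : 'M[R[i]]_(m, r)) (Y : 'M[R[i]]_(r, n)) : R[i] :=
  \sum_(i < m | Urows L Rm k i) \sum_(j < n | Ucols L Rm k j)
     `|A i j - \sum_(k' < r | Uclass L Rm k k') X i k' * Y k' j| ^+ 2.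

(* (X, Y) is a possible output of TwoFactor(A, L, Rm): X, Y vanish outside the
   blocks R_P x P and P x C_P, and on each class P the blocks form a pair
   (H, K) minimizing ||A[R_P,C_P] - H K||_F over all (H, K) of that shape
   (an arbitrary such pair is represented by matrices X', Y'). *)
Definition TwoFactor_output (R : rcfType) (m r n : nat) (A : 'M[R[i]]_(m, n))
  (L : 'M[R[i]]_(m, r)) (Rm : 'M[R[i]]_(r, n))
  (X : 'M[R[i]]_(m, r)) (Y : 'M[R[i]]_(r, n)) : Prop :=
  (forall i k, ~~ Urows L Rm k i -> X i k = 0) /\
  (forall k j, ~~ Ucols L Rm k j -> Y k j = 0) /\
  (forall k (X' : 'M[R[i]]_(m, r)) (Y' : 'M[R[i]]_(r, n)),
      block_err L Rm A k X Y <= block_err L Rm A k X' Y').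

(* S_pi[i,k] = [key i = key k], where the key of an index of I_a (x) _ (x) I_d
   drops its middle coordinate. Hence U_k[i,j] <> 0 iff key i = key1 k and
   key2 k = key j, so two contributions sharing a nonzero entry have the same
   column of S_pi1 and row of S_pi2, and coincide.
   With disjoint-or-equal supports, for X, Y vanishing outside the blocks
   R_P x P and P x C_P the entry (XY)[i,j] only involves the class covering
   (i,j); so ||A - XY||^2 is the sum over the classes of the block errors plus
   the mass of A off every R_P x C_P, and blockwise minimization is global.
   As S_pi1 has no zero column and S_pi2 no zero row, vanishing outside these
   blocks is the same as being a pair of factors. *)
From HB Require Import structures.
From mathcomp Require Import all_boot all_order all_algebra.
From mathcomp Require Import complex mxtens.
From mathcomp Require Import reals.
Set Implicit Arguments. Unset Strict Implicit. Unset Printing Implicit Defensive.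
Import Order.TTheory GRing.Theory Num.Theory.
Local Open Scope ring_scope.

Section RankOneContributions.
Variables (F : fieldType) (m r n : nat) (L : 'M[F]_(m, r)) (Rm : 'M[F]_(r, n)).
Local Notation U := (Ucontrib L Rm).

Definition Ucontrib_disjoint_or_eq (k k' : 'I_r) : Prop :=
  (forall i j, ~~ ((U k i j != 0) && (U k' i j != 0))) \/ U k = U k'.

Lemma UcontribE k i j : U k i j = L i k * Rm k j.
Proof. by rewrite /Ucontrib !mxE big_ord1 !mxE. Qed.

Lemma Urows_Ucols k i j : Urows L Rm k i && Ucols L Rm k j = (U k i j != 0).
Proof.
apply/andP/idP => [[/existsP[j' Uj'] /existsP[i' Ui']] | Uij].
  by move: Uj' Ui'; rewrite !UcontribE !mulf_eq0 !negb_or => /andP[-> _] /andP[_ ->].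
by split; apply/existsP; [exists j | exists i].
Qed.

Lemma UrowsE (Rm_rows : forall k, exists j, Rm k j != 0) k i :
  Urows L Rm k i = (L i k != 0).
Proof.
apply/existsP/idP => [[j] | Lik]; first by rewrite UcontribE mulf_eq0 negb_or => /andP[].
by have [j Rkj] := Rm_rows k; exists j; rewrite UcontribE mulf_neq0.
Qed.

Lemma UcolsE (L_cols : forall k, exists i, L i k != 0) k j :
  Ucols L Rm k j = (Rm k j != 0).
Proof.
apply/existsP/idP => [[i'] | Rkj]; first by rewrite UcontribE mulf_eq0 negb_or => /andP[].
by have [i Lik] := L_cols k; exists i; rewrite UcontribE mulf_neq0.
Qed.

Lemma is_factor_Urows (Rm_rows : forall k, exists j, Rm k j != 0) X :
  is_factor L X <-> forall i k, ~~ Urows L Rm k i -> X i k = 0.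
Proof.
split=> hX i k; first by rewrite (UrowsE Rm_rows) negbK => /eqP; apply: hX.
by move=> /eqP Lik; apply: hX; rewrite (UrowsE Rm_rows) Lik.
Qed.

Lemma is_factor_Ucols (L_cols : forall k, exists i, L i k != 0) Y :
  is_factor Rm Y <-> forall k j, ~~ Ucols L Rm k j -> Y k j = 0.
Proof.
split=> hY k j; first by rewrite (UcolsE L_cols) negbK => /eqP; apply: hY.
by move=> /eqP Rkj; apply: hY; rewrite (UcolsE L_cols) Rkj.
Qed.

Lemma indicator_Ucontrib_disjoint_or_eq (T1 T2 : eqType)
    (fL : 'I_m -> T1) (gL : 'I_r -> T1) (fR : 'I_r -> T2) (gR : 'I_n -> T2) :
    (forall i k, L i k = (fL i == gL k)%:R) ->
    (forall k j, Rm k j = (fR k == gR j)%:R) ->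
  forall k k', Ucontrib_disjoint_or_eq k k'.
Proof.
move=> LE RmE k k'.
have U_neq0 k0 i j : (U k0 i j != 0) = (fL i == gL k0) && (fR k0 == gR j).
  rewrite UcontribE LE RmE.
  by case: (fL i == gL k0); case: (fR k0 == gR j); rewrite ?mulr1 ?mulr0 ?oner_eq0 ?eqxx.
have [/existsP[[i j]] | no_common] :=
  boolP [exists p : 'I_m * 'I_n, (U k p.1 p.2 != 0) && (U k' p.1 p.2 != 0)].
  rewrite /= !U_neq0 => /andP[/andP[/eqP gLk /eqP fRk] /andP[/eqP gLk' /eqP fRk']].
  right; apply/matrixP => i' j'.
  by rewrite !UcontribE !LE !RmE -gLk gLk' fRk -fRk'.
by left=> i j; apply: contraNN no_common => Uij; apply/existsP; exists (i, j).
Qed.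

Section Classes.
Hypothesis disjoint_or_eq : forall k k', Ucontrib_disjoint_or_eq k k'.

Lemma Uclass_neq0 k k' i j : U k i j != 0 -> (U k' i j != 0) = Uclass L Rm k k'.
Proof.
move=> Ukij; rewrite /Uclass; case: (U k' =P U k) => [-> // | neq].
case: (disjoint_or_eq k k') => [disj | eq]; last by rewrite eq in neq.
by apply/negbTE; apply: contraNN (disj i j) => Uk'ij; rewrite Ukij.
Qed.

Definition Uclass_rep (k : 'I_r) : bool :=
  [forall k', Uclass L Rm k k' ==> (k <= k')%N].

Definition Ucovered (i : 'I_m) (j : 'I_n) : bool := [exists k, U k i j != 0].

Lemma Uclass_rep_uniq k k' i j :
  Uclass_rep k -> Uclass_rep k' -> U k i j != 0 -> U k' i j != 0 -> k = k'.
Proof.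
move=> rep_k rep_k' Ukij Uk'ij; apply/val_inj/eqP; rewrite eqn_leq.
rewrite (implyP (forallP rep_k k')) -?(Uclass_neq0 _ Ukij) //.
by rewrite (implyP (forallP rep_k' k)) -?(Uclass_neq0 _ Uk'ij).
Qed.

Lemma exists_Uclass_rep i j : Ucovered i j -> exists2 k, Uclass_rep k & U k i j != 0.
Proof.
case/existsP=> k1 Uk1ij.
case: (@arg_minnP _ k1 (fun k => U k i j != 0) val Uk1ij) => k Ukij k_min.
exists k => //; apply/forallP => k'; apply/implyP => cl_kk'.
by apply: k_min; rewrite (Uclass_neq0 _ Ukij).
Qed.

Lemma big_Uclass_rep (V : nmodType) (v : V) i j :
  \sum_(k | Uclass_rep k) (if U k i j != 0 then v else 0) =
  if Ucovered i j then v else 0.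
Proof.
case: ifP => [/exists_Uclass_rep[k0 rep_k0 Uk0ij] | /negbT uncovered]; last first.
  apply: big1 => k _; case: ifP => // Ukij.
  by case/negP: uncovered; apply/existsP; exists k.
rewrite (bigD1 k0) //= Uk0ij big1 ?addr0 // => k /andP[rep_k k_neq].
case: ifP => // Ukij.
by rewrite (Uclass_rep_uniq rep_k rep_k0 Ukij Uk0ij) eqxx in k_neq.
Qed.

End Classes.
End RankOneContributions.

Section BlockDecomposition.
Variables (R : rcfType) (m r n : nat) (L : 'M[R[i]]_(m, r)) (Rm : 'M[R[i]]_(r, n)).
Local Notation U := (Ucontrib L Rm).
Hypothesis disjoint_or_eq : forall k k', Ucontrib_disjoint_or_eq L Rm k k'.

Definition block_supported (X : 'M[R[i]]_(m, r)) (Y : 'M[R[i]]_(r, n)) : Prop :=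
  (forall i k, ~~ Urows L Rm k i -> X i k = 0) /\
  (forall k j, ~~ Ucols L Rm k j -> Y k j = 0).

Lemma block_supported_sum X Y i j : block_supported X Y ->
  \sum_k X i k * Y k j = \sum_(k | U k i j != 0) X i k * Y k j.
Proof.
move=> [hX hY]; rewrite [RHS]big_mkcond; apply: eq_bigr => k _.
case: ifP => // /negbT; rewrite -Urows_Ucols negb_and => /orP[/hX -> | /hY ->].
  by rewrite mul0r.
by rewrite mulr0.
Qed.

Lemma block_errE A k X Y : block_supported X Y ->
  block_err L Rm A k X Y =
  \sum_i \sum_j (if U k i j != 0 then `|(A - X *m Y) i j| ^+ 2 else 0).
Proof.
move=> XY_supp; rewrite /block_err big_mkcond; apply: eq_bigr => i _.
case: ifP => row_i; last by apply/esym/big1 => j _; rewrite -Urows_Ucols row_i.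
rewrite big_mkcond; apply: eq_bigr => j _; rewrite -Urows_Ucols row_i /=.
case: ifP => // col_j; have Ukij : U k i j != 0 by rewrite -Urows_Ucols row_i.
rewrite !mxE (block_supported_sum _ _ XY_supp); congr (`|_ - _| ^+ 2).
by apply: eq_bigl => k'; rewrite (Uclass_neq0 disjoint_or_eq _ Ukij).
Qed.

Lemma frob2_block_decomposition A X Y : block_supported X Y ->
  frob2 (A - X *m Y) =
    \sum_(k | Uclass_rep L Rm k) block_err L Rm A k X Y +
    \sum_i \sum_j (if Ucovered L Rm i j then 0 else `|A i j| ^+ 2).
Proof.
move=> XY_supp.
under eq_bigr => k _ do rewrite block_errE //.
rewrite exchange_big -big_split /frob2; apply: eq_bigr => i _.
rewrite exchange_big -big_split; apply: eq_bigr => j _ /=.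
rewrite big_Uclass_rep //; case: ifP => [_ | /negbT uncovered]; first by rewrite addr0.
rewrite add0r !mxE (block_supported_sum _ _ XY_supp) big_pred0 ?subr0 // => k.
by apply: negbTE; apply: contraNN uncovered => Ukij; apply/existsP; exists k.
Qed.

Lemma frob2_le_blockwise A X Y X' Y' :
    block_supported X Y -> block_supported X' Y' ->
    (forall k, block_err L Rm A k X Y <= block_err L Rm A k X' Y') ->
  frob2 (A - X *m Y) <= frob2 (A - X' *m Y').
Proof.
move=> XY_supp XY'_supp le_blocks.
rewrite !frob2_block_decomposition // lerD2r.
by apply: ler_sum => k _; apply: le_blocks.
Qed.

Theorem TwoFactor_output_optimal A X Y :
    (forall k, exists i, L i k != 0) -> (forall k, exists j, Rm k j != 0) ->
    TwoFactor_output A L Rm X Y ->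
  [/\ is_factor L X, is_factor Rm Y &
      forall X' Y', is_factor L X' -> is_factor Rm Y' ->
        frob2 (A - X *m Y) <= frob2 (A - X' *m Y')].
Proof.
move=> L_cols Rm_rows [hX [hY opt]].
split; [exact/is_factor_Urows | exact/is_factor_Ucols |].
move=> X' Y' /(is_factor_Urows _ Rm_rows) hX' /(is_factor_Ucols _ L_cols) hY'.
exact: (frob2_le_blockwise (conj hX hY) (conj hX' hY') (fun k => opt k X' Y')).
Qed.

End BlockDecomposition.

Lemma is_factor_castmx (F : fieldType) m n m' n' (e : (m = m') * (n = n'))
    (S X : 'M[F]_(m, n)) :
  is_factor (castmx e S) (castmx e X) <-> is_factor S X.
Proof.
split=> hX i j; rewrite ?castmxE; last exact: hX.
move: hX => /(_ (cast_ord e.1 i) (cast_ord e.2 j)).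
by rewrite !castmxE !cast_ordK.
Qed.

Definition pattern_key (a b d : nat) (i : 'I_(a * b * d)) : 'I_a * 'I_d :=
  ((mxtens_unindex (mxtens_unindex i).1).1, (mxtens_unindex i).2).

Lemma SpatE (F : fieldType) a b c d (i : 'I_(a * b * d)) (j : 'I_(a * c * d)) :
  Spat F a b c d i j = (pattern_key i == pattern_key j)%:R.
Proof.
rewrite /Spat !mxE /pattern_key xpair_eqE.
by case: (_ == _); case: (_ == _); rewrite /= ?mulr1 ?mulr0.
Qed.

Lemma pattern_key_surj a b d : (0 < b)%N ->
  forall p : 'I_a * 'I_d, exists i : 'I_(a * b * d), pattern_key i = p.
Proof.
move=> b_gt0 [p q]; exists (mxtens_index (mxtens_index (p, Ordinal b_gt0), q)).
by rewrite /pattern_key !mxtens_indexK.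
Qed.

Theorem lemma5p1 (R : realType) (a1 b1 c1 d1 a2 b2 c2 d2 : nat)
  (ha1 : (0 < a1)%N) (hb1 : (0 < b1)%N) (hc1 : (0 < c1)%N) (hd1 : (0 < d1)%N)
  (ha2 : (0 < a2)%N) (hb2 : (0 < b2)%N) (hc2 : (0 < c2)%N) (hd2 : (0 < d2)%N)
  (H : (a1 * c1 * d1 = a2 * b2 * d2)%N) :
  let S1 := Spat (R[i]) a1 b1 c1 d1 in
  let S2 := castmx (esym H, erefl) (Spat (R[i]) a2 b2 c2 d2) in
  (forall k k' : 'I_(a1 * c1 * d1),
      (forall i j, ~~ ((Ucontrib S1 S2 k i j != 0) && (Ucontrib S1 S2 k' i j != 0)))
      \/ Ucontrib S1 S2 k = Ucontrib S1 S2 k') /\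
  (forall (A : 'M[R[i]]_(a1 * b1 * d1, a2 * c2 * d2)) X Y,
      TwoFactor_output A S1 S2 X Y ->
      is_factor S1 X /\ is_factor (Spat (R[i]) a2 b2 c2 d2) (castmx (H, erefl) Y) /\
      forall X' Y', is_factor S1 X' ->
        is_factor (Spat (R[i]) a2 b2 c2 d2) (castmx (H, erefl) Y') ->
        frob2 (A - X *m Y) <= frob2 (A - X' *m Y')).
Proof.
move=> S1 S2.
pose key2 k := pattern_key (cast_ord H k).
have S1E i k : S1 i k = (pattern_key i == pattern_key k)%:R by exact: SpatE.
have S2E k j : S2 k j = (key2 k == pattern_key j)%:R.
  by rewrite castmxE SpatE cast_ord_id; congr (pattern_key _ == _)%:R; apply: val_inj.
have disjoint_or_eq := indicator_Ucontrib_disjoint_or_eq S1E S2E.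
have S1_cols k : exists i, S1 i k != 0.
  have [i keyi] := pattern_key_surj hb1 (pattern_key k).
  by exists i; rewrite S1E keyi eqxx oner_eq0.
have S2_rows k : exists j, S2 k j != 0.
  have [j keyj] := pattern_key_surj hc2 (key2 k).
  by exists j; rewrite S2E keyj eqxx oner_eq0.
have Spat2E : Spat (R[i]) a2 b2 c2 d2 = castmx (H, erefl) S2 by rewrite castmxKV.
split; first exact: disjoint_or_eq.
move=> A X Y /(TwoFactor_output_optimal disjoint_or_eq S1_cols S2_rows)[fX fY opt].
rewrite Spat2E is_factor_castmx; split; [exact: fX | split; first exact: fY].
by move=> X' Y' fX' /(is_factor_castmx (H, erefl)) fY'; apply: opt.
Qed.
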